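(* Let $a,x,y\in(0,1)$ with $ay<x$, and let $W_{(\alpha,\beta)}(a,x,y)=(T_1,T_2)$ be the 2-variable weighted shift defined below. Then the operator matrix $L=\begin{pmatrix} T_1^*T_1 & T_2^*T_1\\ T_1^*T_2 & T_2^*T_2\end{pmatrix}$ is positive.
   Context: A 2-variable weighted shift $(T_1,T_2)$ on $\ell^2(\mathbb{Z}_+^2)$ (orthonormal basis $\{e_{\mathbf{k}}\}$) is given by $T_1e_{\mathbf{k}}=\alpha_{\mathbf{k}}e_{\mathbf{k}+(1,0)}$, $T_2e_{\mathbf{k}}=\beta_{\mathbf{k}}e_{\mathbf{k}+(0,1)}$. $W_{(\alpha,\beta)}(a,x,y)$ is the one with $\alpha_{(0,0)}=x$, $\alpha_{(0,k_2)}=a$ for $k_2\ge1$, $\alpha_{(k_1,k_2)}=1$ for $k_1\ge1$; $\beta_{(0,0)}=y$, $\beta_{(k_1,0)}=ay/x$ for $k_1\ge1$, $\beta_{(k_1,k_2)}=1$ for $k_2\ge1$. $L$ acts on $\ell^2(\mathbb{Z}_+^2)\oplus\ell^2(\mathbb{Z}_+^2)$. *)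

From Stdlib Require Import Reals.
From Coquelicot Require Import Coquelicot.
Open Scope R_scope.

Definition vec := nat -> nat -> C.

Definition alpha (a x y : R) (k1 k2 : nat) : R :=
  match k1, k2 with
  | S _, _ => 1
  | O, S _ => a
  | O, O => x
  end.

Definition beta (a x y : R) (k1 k2 : nat) : R :=
  match k1, k2 with
  | _, S _ => 1
  | S _, O => a * y / x
  | O, O => y
  end.

(** T1 e_k = alpha_k e_{k+(1,0)},  T2 e_k = beta_k e_{k+(0,1)}. *)
Definition T1 a x y (u : vec) : vec := fun k1 k2 =>
  match k1 with O => RtoC 0 | S j => Cmult (RtoC (alpha a x y j k2)) (u j k2) end.
Definition T2 a x y (u : vec) : vec := fun k1 k2 =>
  match k2 with O => RtoC 0 | S j => Cmult (RtoC (beta a x y k1 j)) (u k1 j) end.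

(** Adjoints (the weights are real): T1^* e_k = alpha_{k-(1,0)} e_{k-(1,0)}
    (and 0 if k1 = 0), i.e. (T1^* u)(k) = conj(alpha_k) u(k+(1,0)). *)
Definition T1adj a x y (u : vec) : vec := fun k1 k2 =>
  Cmult (Cconj (RtoC (alpha a x y k1 k2))) (u (S k1) k2).
Definition T2adj a x y (u : vec) : vec := fun k1 k2 =>
  Cmult (Cconj (RtoC (beta a x y k1 k2))) (u k1 (S k2)).

Definition vadd (u v : vec) : vec := fun k1 k2 => Cplus (u k1 k2) (v k1 k2).

Definition Lop a x y (h : vec * vec) : vec * vec :=
  (vadd (T1adj a x y (T1 a x y (fst h))) (T2adj a x y (T1 a x y (snd h))),
   vadd (T1adj a x y (T2 a x y (fst h))) (T2adj a x y (T2 a x y (snd h)))).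

Fixpoint csum (n : nat) (F : nat -> C) : C :=
  match n with O => RtoC 0 | S m => Cplus (csum m F) (F m) end.
Fixpoint rsum (n : nat) (F : nat -> R) : R :=
  match n with O => 0 | S m => rsum m F + F m end.

(** u is in l^2(Z_+^2): sum_k |u_k|^2 < oo (nonnegative terms, so bounded
    partial sums over the exhausting squares [0,N)^2). *)
Definition ell2 (u : vec) : Prop :=
  exists M : R, forall N : nat,
    rsum N (fun i => rsum N (fun j => (Cmod (u i j)) ^ 2)) <= M.

Definition ip_partial (N : nat) (h k : vec * vec) : C :=
  Cplus (csum N (fun i => csum N (fun j => Cmult (fst h i j) (Cconj (fst k i j)))))
        (csum N (fun i => csum N (fun j => Cmult (snd h i j) (Cconj (snd k i j))))).

Definition is_inner (h k : vec * vec) (c : C) : Prop :=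
  filterlim (fun N => ip_partial N h k) eventually (locally c).

Definition positive_L a x y : Prop :=
  forall f g : vec, ell2 f -> ell2 g ->
    exists c : C, is_inner (Lop a x y (f, g)) (f, g) c /\ Im c = 0 /\ 0 <= Re c.

From Stdlib Require Import Reals Lra Psatz.
From Coquelicot Require Import Coquelicot.
Open Scope R_scope.

(* <L (f,g), (f,g)> = |T1 f|^2 + |T2 g|^2 + 2 Re <T1 g, T2 f>.  Since
   alpha_(i+1,m) = beta_(i,m+1) = 1, the first two terms dominate
   sum |f_(i+1,m)|^2 + |g_(i,m+1)|^2, while the cross term is
   sum c_(i,m) g_(i,m+1) conj f_(i+1,m) with c_(i,m) = alpha_(i,m+1) beta_(i+1,m)
   in [0,1] (a y < x makes beta_(k,0) = a y / x <= 1).  Each pair thus contributes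
   |u|^2 + |v|^2 + 2 c Re (u conj v) >= 0.  The inner product is a limit of sums
   over squares [0,N)^2, which cut the pairs unevenly; the discrepancy lives on the
   edge of the square and vanishes because f and g are square-summable. *)

Lemma rsum_ext n F G : (forall i, F i = G i) -> rsum n F = rsum n G.
Proof. intros H; induction n as [|n IH]; simpl; [reflexivity | now rewrite IH, H]. Qed.

Lemma rsum_plus n F G : rsum n (fun i => F i + G i) = rsum n F + rsum n G.
Proof. induction n as [|n IH]; simpl; [lra | rewrite IH; lra]. Qed.

Lemma rsum_minus n F G : rsum n (fun i => F i - G i) = rsum n F - rsum n G.
Proof. induction n as [|n IH]; simpl; [lra | rewrite IH; lra]. Qed.

Lemma rsum_zero n : rsum n (fun _ => 0) = 0.
Proof. induction n as [|n IH]; simpl; [reflexivity | rewrite IH; lra]. Qed.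

Lemma rsum_scal n c F : rsum n (fun i => c * F i) = c * rsum n F.
Proof. induction n as [|n IH]; simpl; [ring | rewrite IH; ring]. Qed.

Lemma rsum_le n F G : (forall i, F i <= G i) -> rsum n F <= rsum n G.
Proof. intros H; induction n as [|n IH]; simpl; [lra | specialize (H n); lra]. Qed.

Lemma rsum_nonneg n F : (forall i, 0 <= F i) -> 0 <= rsum n F.
Proof. intros H; induction n as [|n IH]; simpl; [lra | specialize (H n); lra]. Qed.

Lemma rsum_mono n m F : (forall i, 0 <= F i) -> (n <= m)%nat -> rsum n F <= rsum m F.
Proof. intros H Hnm; induction Hnm as [|m _ IH]; simpl; [lra | specialize (H m); lra]. Qed.

Lemma rsum_succ n F : rsum (S n) F = F O + rsum n (fun i => F (S i)).
Proof. induction n as [|n IH]; simpl in *; [lra | rewrite IH; lra]. Qed.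

Lemma rsum_shift_le n F : (forall i, 0 <= F i) -> rsum n (fun i => F (S i)) <= rsum (S n) F.
Proof. intros H; rewrite rsum_succ; specialize (H O); lra. Qed.

Lemma rsum_abs n F : Rabs (rsum n F) <= rsum n (fun i => Rabs (F i)).
Proof.
  induction n as [|n IH]; simpl; [rewrite Rabs_R0; lra |].
  eapply Rle_trans; [apply Rabs_triang | lra].
Qed.

Definition sqsum (N : nat) (h : nat -> nat -> R) : R :=
  rsum N (fun p => rsum N (fun q => h p q)).

Lemma sqsum_plus N h k : sqsum N (fun p q => h p q + k p q) = sqsum N h + sqsum N k.
Proof. unfold sqsum; rewrite <- rsum_plus; apply rsum_ext; intro; apply rsum_plus. Qed.

Lemma sqsum_minus N h k : sqsum N (fun p q => h p q - k p q) = sqsum N h - sqsum N k.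
Proof. unfold sqsum; rewrite <- rsum_minus; apply rsum_ext; intro; apply rsum_minus. Qed.

Lemma sqsum_scal N c h : sqsum N (fun p q => c * h p q) = c * sqsum N h.
Proof. unfold sqsum; rewrite <- rsum_scal; apply rsum_ext; intro; apply rsum_scal. Qed.

Lemma sqsum_le N h k : (forall p q, h p q <= k p q) -> sqsum N h <= sqsum N k.
Proof. intros H; apply rsum_le; intro; apply rsum_le; auto. Qed.

Lemma sqsum_nonneg N h : (forall p q, 0 <= h p q) -> 0 <= sqsum N h.
Proof. intros H; apply rsum_nonneg; intro; apply rsum_nonneg; auto. Qed.

Lemma sqsum_S N h :
  sqsum (S N) h = sqsum N h + rsum N (fun q => h N q) + rsum (S N) (fun p => h p N).
Proof.
  unfold sqsum; simpl rsum at 2.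
  rewrite rsum_plus; simpl; lra.
Qed.

Lemma sqsum_shift1_le K h : (forall p q, 0 <= h p q) ->
  sqsum K (fun i m => h (S i) m) <= sqsum (S K) h.
Proof.
  intros H; unfold sqsum.
  apply Rle_trans with (rsum K (fun i => rsum (S K) (fun q => h (S i) q))).
  - apply rsum_le; intro i; apply rsum_mono; auto.
  - apply (rsum_shift_le K (fun p => rsum (S K) (fun q => h p q))).
    intro; apply rsum_nonneg; auto.
Qed.

Lemma sqsum_shift2_le K h : (forall p q, 0 <= h p q) ->
  sqsum K (fun i m => h i (S m)) <= sqsum (S K) h.
Proof.
  intros H; unfold sqsum.
  apply Rle_trans with (rsum K (fun i => rsum (S K) (fun q => h i q))).
  - apply rsum_le; intro i; apply rsum_shift_le; auto.
  - apply rsum_mono; auto; intro; apply rsum_nonneg; auto.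
Qed.

Definition shift1 (h : nat -> nat -> R) p q := match p with O => 0 | S i => h i q end.
Definition shift2 (h : nat -> nat -> R) p q := match q with O => 0 | S m => h p m end.

Definition edge (h : nat -> nat -> R) K := rsum K (fun i => h i K) + rsum K (fun m => h K m).

Lemma edge_plus h k K : edge (fun i m => h i m + k i m) K = edge h K + edge k K.
Proof.
  unfold edge.
  rewrite (rsum_plus K (fun i => h i K) (fun i => k i K)),
    (rsum_plus K (fun m => h K m) (fun m => k K m)); ring.
Qed.

Lemma sqsum_shift1 K h : sqsum (S K) (shift1 h) = sqsum K h + rsum K (fun i => h i K).
Proof.
  unfold sqsum; rewrite rsum_succ; simpl shift1.
  rewrite rsum_zero, <- rsum_plus, Rplus_0_l; reflexivity.
Qed.

Lemma sqsum_shift2 K h : sqsum (S K) (shift2 h) = sqsum K h + rsum K (fun m => h K m).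
Proof.
  unfold sqsum.
  rewrite (rsum_ext (S K) _ (fun p => rsum K (fun m => h p m))); [reflexivity |].
  intro p; rewrite rsum_succ; simpl; lra.
Qed.

Lemma edge_nonneg k K : (forall p q, 0 <= k p q) -> 0 <= edge k K.
Proof.
  intros Hk; unfold edge.
  pose proof (rsum_nonneg K (fun i => k i K) (fun i => Hk i K)).
  pose proof (rsum_nonneg K (fun m => k K m) (Hk K)); lra.
Qed.

Definition shell (h : nat -> nat -> R) N := sqsum (S N) h - sqsum N h.

Section NonnegativeSquareSums.

Variable h : nat -> nat -> R.
Hypothesis h_nonneg : forall p q, 0 <= h p q.

Lemma shell_ge_row N : rsum (S N) (fun q => h N q) <= shell h N.
Proof.
  unfold shell; rewrite sqsum_S; simpl.
  pose proof (rsum_nonneg N (fun p => h p N) (fun p => h_nonneg p N)); lra.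
Qed.

Lemma shell_ge_col N : rsum (S N) (fun p => h p N) <= shell h N.
Proof.
  unfold shell; rewrite sqsum_S.
  pose proof (rsum_nonneg N (fun q => h N q) (h_nonneg N)); lra.
Qed.

Lemma edge_shift1_le K : edge (fun i m => h (S i) m) K <= shell h K + shell h (S K).
Proof.
  unfold edge; apply Rplus_le_compat.
  - eapply Rle_trans; [apply (rsum_shift_le K (fun p => h p K)); auto | apply shell_ge_col].
  - eapply Rle_trans; [apply rsum_mono with (m := S (S K)); auto | apply shell_ge_row].
Qed.

Lemma edge_shift2_le K : edge (fun i m => h i (S m)) K <= shell h K + shell h (S K).
Proof.
  rewrite Rplus_comm; unfold edge; apply Rplus_le_compat.
  - eapply Rle_trans; [apply rsum_mono with (m := S (S K)); auto | apply shell_ge_col].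
  - eapply Rle_trans; [apply rsum_shift_le; auto | apply shell_ge_row].
Qed.

Lemma sqsum_incr N : sqsum N h <= sqsum (S N) h.
Proof.
  rewrite sqsum_S.
  pose proof (rsum_nonneg N (fun q => h N q) (h_nonneg N)).
  pose proof (rsum_nonneg (S N) (fun p => h p N) (fun p => h_nonneg p N)); lra.
Qed.

Variable M : R.
Hypothesis h_bounded : forall N, sqsum N h <= M.

Lemma sqsum_cvg : ex_finite_lim_seq (fun N => sqsum N h).
Proof. apply ex_finite_lim_seq_incr with M; [exact sqsum_incr | exact h_bounded]. Qed.

Lemma shell_lim : is_lim_seq (shell h) 0.
Proof.
  destruct sqsum_cvg as [l Hl].
  replace 0 with (l - l) by ring.
  apply is_lim_seq_minus'; [apply -> (is_lim_seq_incr_1 (fun N => sqsum N h)) |]; exact Hl.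
Qed.

Lemma shell_pair_lim : is_lim_seq (fun K => shell h K + shell h (S K)) 0.
Proof.
  replace 0 with (0 + 0) by ring.
  apply is_lim_seq_plus'; [| apply -> (is_lim_seq_incr_1 (shell h))]; exact shell_lim.
Qed.

Lemma edge_shift1_lim : is_lim_seq (edge (fun i m => h (S i) m)) 0.
Proof.
  apply is_lim_seq_le_le with (fun _ => 0) (fun K => shell h K + shell h (S K));
    [| apply is_lim_seq_const | exact shell_pair_lim].
  intro K; split; [apply edge_nonneg; auto | apply edge_shift1_le].
Qed.

Lemma edge_shift2_lim : is_lim_seq (edge (fun i m => h i (S m))) 0.
Proof.
  apply is_lim_seq_le_le with (fun _ => 0) (fun K => shell h K + shell h (S K));
    [| apply is_lim_seq_const | exact shell_pair_lim].
  intro K; split; [apply edge_nonneg; auto | apply edge_shift2_le].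
Qed.

End NonnegativeSquareSums.

Lemma sqsum_dominated_cvg r k M :
  (forall p q, Rabs (r p q) <= k p q) -> (forall N, sqsum N k <= M) ->
  ex_finite_lim_seq (fun N => sqsum N r).
Proof.
  intros Hrk Hk.
  assert (k_nonneg : forall p q, 0 <= k p q)
    by (intros p q; eapply Rle_trans; [apply Rabs_pos | apply Hrk]).
  assert (Hkr : ex_finite_lim_seq (fun N => sqsum N (fun p q => k p q + r p q))).
  { apply sqsum_cvg with (M + M).
    - intros p q; specialize (Hrk p q); apply Rabs_le_between in Hrk; lra.
    - intro N; rewrite sqsum_plus; specialize (Hk N).
      enough (sqsum N r <= sqsum N k) by lra.
      apply sqsum_le; intros p q; specialize (Hrk p q); apply Rabs_le_between in Hrk; lra. }
  destruct Hkr as [lkr Hlkr], (sqsum_cvg k k_nonneg M Hk) as [lk Hlk].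
  exists (lkr - lk).
  eapply is_lim_seq_ext; [| exact (is_lim_seq_minus' _ _ _ _ Hlkr Hlk)].
  intro N; simpl; rewrite sqsum_plus; ring.
Qed.

Lemma edge_abs_le r e K : (forall i m, 2 * Rabs (r i m) <= e i m) ->
  2 * (Rabs (rsum K (fun i => r i K)) + Rabs (rsum K (fun m => r K m))) <= edge e K.
Proof.
  intros Hre; unfold edge.
  pose proof (rsum_abs K (fun i => r i K)) as Hcol.
  pose proof (rsum_abs K (fun m => r K m)) as Hrow.
  pose proof (rsum_le K _ _ (fun i => Hre i K)) as Hecol.
  pose proof (rsum_le K _ (fun m => e K m) (Hre K)) as Herow.
  rewrite rsum_scal in Hecol, Herow; lra.
Qed.

Lemma is_lim_seq_abs_le_0 u e : (forall n, Rabs (u n) <= e n) -> is_lim_seq e 0 ->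
  is_lim_seq u 0.
Proof.
  intros Hue He; apply is_lim_seq_abs_0.
  apply is_lim_seq_le_le with (fun _ => 0) e; [| apply is_lim_seq_const | exact He].
  intro n; split; [apply Rabs_pos | apply Hue].
Qed.

Lemma filterlim_C_Re_Im (s : nat -> C) (u v : R) :
  is_lim_seq (fun n => Re (s n)) u -> is_lim_seq (fun n => Im (s n)) v ->
  filterlim s eventually (locally ((u, v) : C)).
Proof.
  intros Hu Hv.
  apply filterlim_ext with (fun n => (Re (s n), Im (s n))); [intro n; now destruct (s n) |].
  eapply filterlim_filter_le_2; [| exact (filterlim_pair _ _ Hu Hv)].
  intros P [eps HP].
  exists (ball u eps) (ball v eps); [now exists eps | now exists eps |].
  intros u' v' Hu' Hv'; apply HP; split; assumption.
Qed.

Lemma Rabs_Im_le_Cmod z : Rabs (Im z) <= Cmod z.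
Proof.
  destruct z as [u v].
  pose proof (re_le_Cmod (v, u)) as H.
  unfold Cmod in *; simpl in *; rewrite Rplus_comm; exact H.
Qed.

Lemma Re_csum n F : Re (csum n F) = rsum n (fun i => Re (F i)).
Proof. induction n as [|n IH]; simpl; [reflexivity | now rewrite <- IH]. Qed.

Lemma Im_csum n F : Im (csum n F) = rsum n (fun i => Im (F i)).
Proof. induction n as [|n IH]; simpl; [reflexivity | now rewrite <- IH]. Qed.

Lemma contraction_mul_le w t : 0 <= w <= 1 -> 0 <= t -> w ^ 2 * t <= t.
Proof.
  intros Hw Ht.
  assert (0 <= (1 - w ^ 2) * t) by (apply Rmult_le_pos; [simpl; nra | exact Ht]).
  lra.
Qed.

Definition sqmod (u : vec) p q := Cmod (u p q) ^ 2.

Lemma sqmod_nonneg u p q : 0 <= sqmod u p q.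
Proof. apply pow2_ge_0. Qed.

Section WeightedShift.

Variables a x y : R.
Hypothesis alpha_range : forall p q, 0 <= alpha a x y p q <= 1.
Hypothesis beta_range : forall p q, 0 <= beta a x y p q <= 1.

Definition coupling i m := alpha a x y i (S m) * beta a x y (S i) m.

Lemma coupling_range i m : 0 <= coupling i m <= 1.
Proof.
  unfold coupling.
  pose proof (alpha_range i (S m)); pose proof (beta_range (S i) m); nra.
Qed.

Variables f g : vec.

Definition diag p q := alpha a x y p q ^ 2 * sqmod f p q + beta a x y p q ^ 2 * sqmod g p q.

(* The term of <T1 g, T2 f> at the index (i+1, m+1). *)
Definition cross i m : C := (RtoC (coupling i m) * (g i (S m) * Cconj (f (S i) m)))%C.

Definition pair_energy i m := sqmod f (S i) m + sqmod g i (S m).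

Lemma Cmod_cross_le i m : 2 * Cmod (cross i m) <= pair_energy i m.
Proof.
  unfold cross, pair_energy, sqmod.
  rewrite !Cmod_mult, Cmod_R, Cmod_conj, Rabs_pos_eq by apply coupling_range.
  set (u := Cmod (g i (S m))); set (v := Cmod (f (S i) m)).
  assert (0 <= (1 - coupling i m) * (u * v)).
  { apply Rmult_le_pos; [pose proof (coupling_range i m); lra |].
    apply Rmult_le_pos; apply Cmod_ge_0. }
  pose proof (pow2_ge_0 (u - v)); nra.
Qed.

Lemma Re_cross_le i m : 2 * Rabs (Re (cross i m)) <= pair_energy i m.
Proof. pose proof (re_le_Cmod (cross i m)); pose proof (Cmod_cross_le i m); lra. Qed.

Lemma Im_cross_le i m : 2 * Rabs (Im (cross i m)) <= pair_energy i m.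
Proof. pose proof (Rabs_Im_le_Cmod (cross i m)); pose proof (Cmod_cross_le i m); lra. Qed.

Let s N := ip_partial N (Lop a x y (f, g)) (f, g).

Lemma Re_ip_partial N : Re (s N) =
  sqsum N (fun p q => diag p q + shift1 (fun i m => Re (cross i m)) p q
                               + shift2 (fun i m => Re (cross i m)) p q).
Proof.
  unfold s, ip_partial; change (Re (Cplus ?u ?v)) with (Re u + Re v).
  rewrite !Re_csum; unfold sqsum; rewrite <- rsum_plus; apply rsum_ext; intro p.
  rewrite !Re_csum, <- rsum_plus; apply rsum_ext; intro q.
  unfold diag, sqmod, cross, coupling; rewrite !Cmod2_alt.
  unfold Lop, vadd, T1adj, T2adj, T1, T2; simpl fst; simpl snd.
  destruct p, q; unfold Re, Im, Cmult, Cplus, Cconj, RtoC; simpl; ring.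
Qed.

Lemma Im_ip_partial N : Im (s N) =
  sqsum N (fun p q => shift1 (fun i m => Im (cross i m)) p q
                    - shift2 (fun i m => Im (cross i m)) p q).
Proof.
  unfold s, ip_partial; change (Im (Cplus ?u ?v)) with (Im u + Im v).
  rewrite !Im_csum; unfold sqsum; rewrite <- rsum_plus; apply rsum_ext; intro p.
  rewrite !Im_csum, <- rsum_plus; apply rsum_ext; intro q.
  unfold cross, coupling.
  unfold Lop, vadd, T1adj, T2adj, T1, T2; simpl fst; simpl snd.
  destruct p, q; unfold Re, Im, Cmult, Cplus, Cconj, RtoC; simpl; ring.
Qed.

Lemma Re_ip_partial_S K : Re (s (S K)) =
  sqsum (S K) diag + 2 * sqsum K (fun i m => Re (cross i m)) + edge (fun i m => Re (cross i m)) K.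
Proof.
  rewrite Re_ip_partial, !sqsum_plus, sqsum_shift1, sqsum_shift2; unfold edge; ring.
Qed.

Lemma Im_ip_partial_S K : Im (s (S K)) =
  rsum K (fun i => Im (cross i K)) - rsum K (fun m => Im (cross K m)).
Proof. rewrite Im_ip_partial, sqsum_minus, sqsum_shift1, sqsum_shift2; ring. Qed.

Lemma energy_le_diag K : sqsum K pair_energy <= sqsum (S K) diag.
Proof.
  assert (alpha_shift : forall i m, alpha a x y (S i) m = 1) by reflexivity.
  assert (beta_shift : forall i m, beta a x y i (S m) = 1) by (intros [|i] m; reflexivity).
  unfold pair_energy, diag; rewrite !sqsum_plus.
  apply Rplus_le_compat.
  - eapply Rle_trans; [| apply (sqsum_shift1_le K (fun p q => alpha a x y p q ^ 2 * sqmod f p q))].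
    + apply sqsum_le; intros i m; rewrite alpha_shift; lra.
    + intros p q; apply Rmult_le_pos; [apply pow2_ge_0 | apply sqmod_nonneg].
  - eapply Rle_trans; [| apply (sqsum_shift2_le K (fun p q => beta a x y p q ^ 2 * sqmod g p q))].
    + apply sqsum_le; intros i m; rewrite beta_shift; lra.
    + intros p q; apply Rmult_le_pos; [apply pow2_ge_0 | apply sqmod_nonneg].
Qed.

Lemma edge_Re_cross_le_Re_ip K : edge (fun i m => Re (cross i m)) K <= Re (s (S K)).
Proof.
  rewrite Re_ip_partial_S.
  enough (Hpairs : 0 <= sqsum K (fun i m => pair_energy i m + 2 * Re (cross i m))).
  { rewrite sqsum_plus, sqsum_scal in Hpairs; pose proof (energy_le_diag K); lra. }
  apply sqsum_nonneg; intros i m.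
  pose proof (Re_cross_le i m) as Hc; pose proof (Rle_abs (- Re (cross i m))).
  rewrite Rabs_Ropp in *; lra.
Qed.

Variables Mf Mg : R.
Hypothesis f_l2 : forall N, sqsum N (sqmod f) <= Mf.
Hypothesis g_l2 : forall N, sqsum N (sqmod g) <= Mg.

Lemma edge_energy_lim : is_lim_seq (edge pair_energy) 0.
Proof.
  apply is_lim_seq_ext with
    (fun K => edge (fun i m => sqmod f (S i) m) K + edge (fun i m => sqmod g i (S m)) K).
  { intro K; symmetry; apply edge_plus. }
  replace 0 with (0 + 0) by ring.
  apply is_lim_seq_plus'.
  - apply edge_shift1_lim with Mf; [apply sqmod_nonneg | exact f_l2].
  - apply edge_shift2_lim with Mg; [apply sqmod_nonneg | exact g_l2].
Qed.

Lemma abs_le_edge_energy r K : (forall i m, 2 * Rabs (r i m) <= pair_energy i m) ->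
  Rabs (rsum K (fun i => r i K)) + Rabs (rsum K (fun m => r K m)) <= edge pair_energy K.
Proof.
  intros Hr; pose proof (edge_abs_le r pair_energy K Hr).
  pose proof (Rabs_pos (rsum K (fun i => r i K))); pose proof (Rabs_pos (rsum K (fun m => r K m))).
  lra.
Qed.

Lemma edge_Re_cross_lim : is_lim_seq (edge (fun i m => Re (cross i m))) 0.
Proof.
  apply is_lim_seq_abs_le_0 with (edge pair_energy); [| exact edge_energy_lim].
  intro K; unfold edge at 1.
  eapply Rle_trans; [apply Rabs_triang |].
  apply (abs_le_edge_energy (fun i m => Re (cross i m))), Re_cross_le.
Qed.

Lemma Im_ip_lim : is_lim_seq (fun N => Im (s N)) 0.
Proof.
  apply is_lim_seq_incr_1, is_lim_seq_abs_le_0 with (edge pair_energy);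
    [| exact edge_energy_lim].
  intro K; rewrite Im_ip_partial_S; unfold Rminus.
  eapply Rle_trans; [apply Rabs_triang |]; rewrite Rabs_Ropp.
  apply (abs_le_edge_energy (fun i m => Im (cross i m))), Im_cross_le.
Qed.

Lemma Re_ip_lim : exists l : R, is_lim_seq (fun N => Re (s N)) l /\ 0 <= l.
Proof.
  destruct (sqsum_cvg diag) with (Mf + Mg) as [ld Hld].
  { intros p q; unfold diag.
    apply Rplus_le_le_0_compat; apply Rmult_le_pos; auto using pow2_ge_0, sqmod_nonneg. }
  { intro N; unfold diag; rewrite sqsum_plus.
    pose proof (f_l2 N); pose proof (g_l2 N).
    enough (sqsum N (fun p q => alpha a x y p q ^ 2 * sqmod f p q) <= sqsum N (sqmod f) /\
            sqsum N (fun p q => beta a x y p q ^ 2 * sqmod g p q) <= sqsum N (sqmod g)) by lra.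
    split; apply sqsum_le; intros p q.
    - apply contraction_mul_le; [apply alpha_range | apply sqmod_nonneg].
    - apply contraction_mul_le; [apply beta_range | apply sqmod_nonneg]. }
  destruct (sqsum_dominated_cvg (fun i m => Re (cross i m)) pair_energy (Mf + Mg))
    as [lc Hlc].
  { intros i m; pose proof (Re_cross_le i m); pose proof (Rabs_pos (Re (cross i m))); lra. }
  { intro K; unfold pair_energy; rewrite sqsum_plus.
    pose proof (sqsum_shift1_le K (sqmod f) (sqmod_nonneg f)); pose proof (f_l2 (S K)).
    pose proof (sqsum_shift2_le K (sqmod g) (sqmod_nonneg g)); pose proof (g_l2 (S K)).
    lra. }
  assert (Hl : is_lim_seq (fun K => Re (s (S K))) (ld + 2 * lc + 0)).
  { eapply is_lim_seq_ext; [intro K; symmetry; apply Re_ip_partial_S |].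
    apply is_lim_seq_plus'; [apply is_lim_seq_plus' |].
    - apply -> (is_lim_seq_incr_1 (fun N => sqsum N diag)); exact Hld.
    - exact (is_lim_seq_scal_l _ 2 lc Hlc).
    - exact edge_Re_cross_lim. }
  exists (ld + 2 * lc + 0); split; [apply is_lim_seq_incr_1; exact Hl |].
  apply (is_lim_seq_le _ _ 0 _ edge_Re_cross_le_Re_ip edge_Re_cross_lim Hl).
Qed.

Lemma Lop_inner_nonneg :
  exists c : C, is_inner (Lop a x y (f, g)) (f, g) c /\ Im c = 0 /\ 0 <= Re c.
Proof.
  destruct Re_ip_lim as [l [Hl Hl0]].
  exists ((l, 0) : C); split; [| split; [reflexivity | exact Hl0]].
  exact (filterlim_C_Re_Im s l 0 Hl Im_ip_lim).
Qed.

End WeightedShift.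

Lemma weighted_shift_positive_L a x y :
  (forall p q, 0 <= alpha a x y p q <= 1) -> (forall p q, 0 <= beta a x y p q <= 1) ->
  positive_L a x y.
Proof.
  intros Halpha Hbeta f g [Mf Hf] [Mg Hg].
  exact (Lop_inner_nonneg a x y Halpha Hbeta f g Mf Mg Hf Hg).
Qed.

Theorem lemma3p14 (a x y : R) :
  0 < a < 1 -> 0 < x < 1 -> 0 < y < 1 -> a * y < x ->
  positive_L a x y.
Proof.
  intros Ha Hx Hy Hayx.
  assert (0 <= a * y / x <= 1).
  { split; [apply Rdiv_le_0_compat; nra | apply -> (Rdiv_le_1 (a * y) x); lra]. }
  apply weighted_shift_positive_L; intros [|p] [|q]; cbn [alpha beta]; lra.
Qed.
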